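(* For $n=2$, $DCell_1$ is Hamiltonian but not Hamiltonian-connected. The same holds for every Generalized $DCell_1$ with $n=2$.
   Context: $DCell_0$ is the complete graph $K_n$ ($t_0=n$ vertices). $DCell_1$ consists of $t_0+1$ vertex-disjoint copies $D_0^0,\dots,D_0^{t_0}$ of $K_n$, with vertices of each copy numbered $0,\dots,n-1$, and for each pair $a<b$ the vertex numbered $b-1$ of $D_0^a$ is joined to the vertex numbered $a$ of $D_0^b$. A Generalized $DCell_1$ uses instead any set of edges between the copies such that each pair of distinct copies is joined by exactly one edge and each vertex is incident with exactly one such edge. A graph is Hamiltonian-connected if every two distinct vertices are the endpoints of a Hamiltonian path. *)

From mathcomp Require Import all_boot.
Set Implicit Arguments. Unset Strict Implicit. Unset Printing Implicit Defensive.

(* Vertices of a DCell_1 built from K_n: pairs (copy index a in {0..n}, vertex number i in {0..n-1}). *)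
Definition dvert (n : nat) : finType := ('I_n.+1 * 'I_n)%type.

Definition ham_cycle (T : finType) (e : rel T) (s : seq T) : bool :=
  [&& uniq s, size s == #|T|, 2 < size s & cycle e s].

Definition hamiltonian (T : finType) (e : rel T) : Prop :=
  exists s : seq T, ham_cycle e s.

Definition ham_path (T : finType) (e : rel T) (u v : T) (p : seq T) : bool :=
  [&& uniq (u :: p), size (u :: p) == #|T|, path e u p & last u p == v].

Definition ham_connected (T : finType) (e : rel T) : Prop :=
  forall u v : T, u != v -> exists p : seq T, ham_path e u v p.

Definition intra_edge (n : nat) (x y : dvert n) : bool :=
  (x.1 == y.1) && (x.2 != y.2).

Definition dcell_link (n : nat) (x y : dvert n) : bool :=
  let a := nat_of_ord x.1 in let i := nat_of_ord x.2 in
  let b := nat_of_ord y.1 in let j := nat_of_ord y.2 in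
  [&& a < b, i == b.-1 & j == a] || [&& b < a, j == a.-1 & i == b].

Definition dcell1 (n : nat) : rel (dvert n) :=
  fun x y => intra_edge x y || dcell_link x y.

Definition gen_links (n : nat) (E : rel (dvert n)) : Prop :=
  [/\ (forall x y, E x y = E y x),
      (forall x y, E x y -> x.1 != y.1),
      (forall a b : 'I_n.+1, a != b ->
         #|[set xy : dvert n * dvert n | [&& xy.1.1 == a, xy.2.1 == b & E xy.1 xy.2]]| = 1)
    & (forall x, #|[set y | E x y]| = 1)].

Definition gdcell1 (n : nat) (E : rel (dvert n)) : rel (dvert n) :=
  fun x y => intra_edge x y || E x y.

From mathcomp Require Import all_boot zify.
Set Implicit Arguments. Unset Strict Implicit. Unset Printing Implicit Defensive.

(* For n = 2 every copy is a single edge {x, partner x} and every vertex has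
   exactly one link, given by an involution f that changes copies; the graph is
   the union of the two perfect matchings partner and f.  Both vertices of a copy
   cannot link into the same copy (the third copy would then have nowhere to
   link), so rot := f \o partner visits the three copies in turn and
   x, partner x, rot x, partner (rot x), rot^2 x, partner (rot^2 x) is a
   Hamiltonian cycle.  On the other hand partner x has no neighbours besides x
   and rot x, so a Hamiltonian path from x to rot x would have to be
   x, partner x, rot x, which misses three vertices. *)

Lemma mem_ham_path (T : finType) (e : rel T) u v p x :
  ham_path e u v p -> x \in u :: p.
Proof.
case/and4P=> uniq_up /eqP size_up _ _.
have card_up : #|u :: p| = #|T| by rewrite (card_uniqP uniq_up).
by rewrite (subset_cardP card_up (subset_predT _)).
Qed.

Lemma last_uniq (T : eqType) (x : T) s : uniq (x :: s) -> last x s = x -> s = [::].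
Proof.
case: s => [//|y s] /andP[xNys _] /= last_x.
by rewrite -last_x mem_last in xNys.
Qed.

Lemma ham_path_private_neighbour (T : finType) (e : rel T) u w v p :
  symmetric e -> (forall y, e w y -> (y == u) || (y == v)) -> w != u -> w != v ->
  ham_path e u v p -> p = [:: w; v].
Proof.
move=> e_sym w_nbr wNu wNv hp.
have := mem_ham_path w hp; rewrite inE (negbTE wNu) /= => w_p.
case/and4P: hp => uniq_up _ path_up /eqP last_up.
case/splitPr: w_p uniq_up path_up last_up => p1 p2 uniq_up path_up last_up.
rewrite cat_path /= in path_up.
case/and3P: path_up => _ e_p1w path_w.
case: p2 => [|y p2] in uniq_up path_w last_up *.
  by rewrite last_cat /= in last_up; rewrite last_up eqxx in wNv.
move: uniq_up; rewrite /= mem_cat !inE cat_uniq /= !negb_or.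
case/andP: path_w => e_wy _.
case/and3P=> /and4P[uNp1 _ uNy uNp2] _ /and3P[disj _ /andP[yNp2 uniq_p2]].
have y_v : y = v.
  by move: (w_nbr y e_wy); rewrite eq_sym (negbTE uNy) => /eqP.
rewrite last_cat /= y_v in last_up.
have -> : p2 = [::] by apply: (@last_uniq _ v); rewrite //= -y_v yNp2.
case: p1 => [|x p1] in uNp1 disj e_p1w *; first by rewrite y_v.
have z_p1 : last u (x :: p1) \in x :: p1 by exact: (mem_last x p1).
move: (w_nbr _ (etrans (e_sym _ _) e_p1w)) => /orP[/eqP z_u | /eqP z_v].
  by rewrite -z_u z_p1 in uNp1.
by rewrite y_v -z_v z_p1 andbF in disj.
Qed.

Lemma frel_of_card1 (T : finType) (E : rel T) :
  (forall x, #|[set y | E x y]| = 1) -> {f : T -> T | E =2 frel f}.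
Proof.
move=> card1E; exists (fun x => sval (mem_card1 (card1E x))) => x y /=.
case: mem_card1 => z /= /(_ y); rewrite inE => ->.
by rewrite eq_sym.
Qed.

Lemma frel_sym_involutive (T : eqType) (f : T -> T) :
  symmetric (frel f) -> involutive f.
Proof. by move=> f_sym x; have := f_sym x (f x); rewrite /= eqxx => /esym/eqP. Qed.

(* The default [x.2] of [insubd] is never used: the value is always below [n]. *)
Definition dcell_peer n (x : dvert n) : dvert n :=
  if x.2 < x.1 then (inord x.2, insubd x.2 x.1.-1) else (inord x.2.+1, insubd x.2 x.1).

Lemma dcell_linkE n : @dcell_link n =2 frel (@dcell_peer n).
Proof.
move=> [a i] [b j]; rewrite /dcell_link /dcell_peer /=.
have := ltn_ord i; have := ltn_ord a; have := ltn_ord b; have := ltn_ord j.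
case: ifP => i_a; rewrite xpair_eqE -[_ == j](inj_eq val_inj) -[_ == b](inj_eq val_inj) /= !val_insubd.
  by do 2!case: ifP; lia.
by do 2!case: ifP; lia.
Qed.

Lemma dcell_link_sym n : symmetric (@dcell_link n).
Proof. by move=> x y; rewrite /dcell_link orbC. Qed.

Lemma dcell_link_cross n (x y : dvert n) : dcell_link x y -> x.1 != y.1.
Proof.
rewrite -val_eqE /dcell_link => /orP[] /and3P[lt _ _].
  by rewrite ltn_eqF.
by rewrite gtn_eqF.
Qed.

Definition partner (x : dvert 2) : dvert 2 := (x.1, rev_ord x.2).

Lemma partnerK : involutive partner.
Proof. by move=> [a i]; rewrite /partner rev_ordK. Qed.

Lemma partner_eqF (x : dvert 2) : (partner x == x) = false.
Proof. by case: x => a [[|[|?]] ?]; rewrite xpair_eqE -val_eqE /= eqxx. Qed.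

Lemma intra_edge_partner (x y : dvert 2) : intra_edge x y = (y == partner x).
Proof.
case: x y => a [[|[|?]] ?] [b [[|[|?]] ?]] //; rewrite /intra_edge xpair_eqE eq_sym.
all: by rewrite -!val_eqE /= ?andbT ?andbF.
Qed.

Lemma same_copyE (x y : dvert 2) : (y.1 == x.1) = (y == x) || (y == partner x).
Proof.
case: x y => a [[|[|?]] ?] [b [[|[|?]] ?]] //; rewrite !xpair_eqE -!val_eqE /=.
all: by rewrite ?andbT ?andbF ?orbF.
Qed.

Lemma ord3_other (a b : 'I_3) : a != b -> exists2 c : 'I_3, a != c & b != c.
Proof.
move=> ab; exists (inord (3 - a - b)); rewrite -!val_eqE /= inordK;
  move: ab; rewrite -val_eqE /=; have := ltn_ord a; have := ltn_ord b; lia.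
Qed.

Lemma ord3_third (a b c d : 'I_3) :
  a != b -> a != c -> b != c -> d != a -> d != b -> d = c.
Proof.
move=> ab ac bc da db; apply: val_inj; move: ab ac bc da db; rewrite -!val_eqE /=.
have := ltn_ord a; have := ltn_ord b; have := ltn_ord c; have := ltn_ord d; lia.
Qed.

Lemma uniq_partner_pairs (x y z : dvert 2) :
  x.1 != y.1 -> x.1 != z.1 -> y.1 != z.1 ->
  uniq [:: x; partner x; y; partner y; z; partner z].
Proof.
case: x y z => [a i] [b j] [c k] /= ab ac bc.
have rev2F (l : 'I_2) : (l == rev_ord l) = false by case: l => [[|[|?]] ?].
by rewrite /= !inE !xpair_eqE (negbTE ab) (negbTE ac) (negbTE bc) !eqxx !rev2F.
Qed.

Lemma card_dvert2 : #|dvert 2| = 6.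
Proof. by rewrite card_prod !card_ord. Qed.

Section TwoMatchings.

Variable f : dvert 2 -> dvert 2.
Hypothesis fK : involutive f.
Hypothesis f_cross : forall x, (f x).1 != x.1.

Lemma f_partner (x : dvert 2) :
  (f (partner x)).1 = (f x).1 -> f (partner x) = partner (f x).
Proof.
by move/eqP; rewrite same_copyE (inj_eq (can_inj fK)) partner_eqF => /eqP.
Qed.

Lemma f_partner_cross (x : dvert 2) : (f (partner x)).1 != (f x).1.
Proof.
apply/eqP => /f_partner fpx.
have f_to_x y : ((f y).1 == x.1) = (y.1 == (f x).1).
  by rewrite !same_copyE -fpx !(can2_eq fK fK).
have [d fxNd xNd] := ord3_other (f_cross x).
pose z : dvert 2 := (d, ord0).
have fzNx : (f z).1 != x.1 by rewrite f_to_x eq_sym.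
have fzNfx : (f z).1 != (f x).1 by rewrite -f_to_x fK eq_sym.
by have := f_cross z; rewrite (ord3_third (f_cross x) fxNd xNd fzNfx fzNx) eqxx.
Qed.

Definition rot (x : dvert 2) : dvert 2 := f (partner x).

Lemma rot_cross x : (rot x).1 != x.1.
Proof. exact: f_cross. Qed.

Lemma rot2_cross x : (rot (rot x)).1 != x.1.
Proof. by have := f_partner_cross (rot x); rewrite /rot fK. Qed.

Lemma rot3 x : rot (rot (rot x)) = x.
Proof.
set w := rot (rot x).
have wNrx : w.1 != (rot x).1 by apply: rot_cross.
have rwNw : (rot w).1 != w.1 by apply: rot_cross.
have rwNrx : (rot w).1 != (rot x).1 by have := f_partner_cross w; rewrite /w /rot fK.
move/eqP: (ord3_third wNrx (rot2_cross x) (rot_cross x) rwNw rwNrx).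
rewrite same_copyE => /orP[/eqP // | /eqP rw_px].
by move: wNrx; rewrite -[w.1]/((partner w).1) -[partner w]fK [f (partner w)]rw_px eqxx.
Qed.

Definition rot_cycle x : seq (dvert 2) :=
  [:: x; partner x; rot x; partner (rot x); rot (rot x); partner (rot (rot x))].

Lemma uniq_rot_cycle x : uniq (rot_cycle x).
Proof.
by apply: uniq_partner_pairs; rewrite eq_sym ?rot_cross ?rot2_cross.
Qed.

Variable e : rel (dvert 2).
Hypothesis eE : e =2 gdcell1 (frel f).

Lemma edgeE x y : e x y = (y == partner x) || (f x == y).
Proof. by rewrite eE /gdcell1 intra_edge_partner. Qed.

Lemma e_sym : symmetric e.
Proof.
move=> x y; rewrite !edgeE; congr orb.
  by rewrite eq_sym (can2_eq partnerK partnerK).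
by rewrite (can2_eq fK fK) eq_sym.
Qed.

Lemma cycle_rot_cycle x : cycle e (rot_cycle x).
Proof.
rewrite /= !edgeE -[f (partner (rot (rot x)))]/(rot (rot (rot x))) rot3.
by rewrite /rot !eqxx !orbT.
Qed.

Lemma hamiltonian_two_matchings : hamiltonian e.
Proof.
exists (rot_cycle (ord0, ord0)).
by rewrite /ham_cycle uniq_rot_cycle cycle_rot_cycle card_dvert2.
Qed.

Lemma not_ham_connected_two_matchings : ~ ham_connected e.
Proof.
move=> e_hc; pose x : dvert 2 := (ord0, ord0).
have xNrx : x != rot x by apply: contraNneq (rot_cross x) => <-.
have [p hp] := e_hc _ _ xNrx.
have p_eq : p = [:: partner x; rot x].
  apply: (ham_path_private_neighbour e_sym _ _ _ hp).
  - by move=> y; rewrite edgeE partnerK [f _ == _]eq_sym.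
  - by rewrite partner_eqF.
  - by apply: contraNneq (rot_cross x) => <-.
by move: hp; rewrite p_eq => /and4P[_ /eqP]; rewrite card_dvert2.
Qed.

Lemma two_matchings_hamiltonian_not_connected : hamiltonian e /\ ~ ham_connected e.
Proof.
by split; [exact: hamiltonian_two_matchings | exact: not_ham_connected_two_matchings].
Qed.

End TwoMatchings.

Theorem lemma2 :
  (hamiltonian (@dcell1 2) /\ ~ ham_connected (@dcell1 2)) /\
  (forall E : rel (dvert 2), gen_links E ->
     hamiltonian (gdcell1 E) /\ ~ ham_connected (gdcell1 E)).
Proof.
split.
  apply: (two_matchings_hamiltonian_not_connected (f := @dcell_peer 2)).
  - by apply: frel_sym_involutive => x y; rewrite -!dcell_linkE dcell_link_sym.
  - by move=> x; rewrite eq_sym dcell_link_cross // dcell_linkE /= eqxx.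
  - by move=> x y; rewrite /dcell1 /gdcell1 dcell_linkE.
move=> E [E_sym E_cross _ E_card1]; have [f Ef] := frel_of_card1 E_card1.
apply: (two_matchings_hamiltonian_not_connected (f := f)).
- by apply: frel_sym_involutive => x y; rewrite -!Ef E_sym.
- by move=> x; rewrite eq_sym E_cross // Ef /= eqxx.
- by move=> x y; rewrite /gdcell1 Ef.
Qed.
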